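(* Let $u,v\in\mathbb{Z}[i]$ with $\gcd(u,v)\in U$ and $uv\equiv0\pmod{1+i}$. Then there exist $x,y\in\mathbb{Z}[i]$ with $\gcd(x,y)\in U$ satisfying $x-y=u+v$ and $xy=iuv$ if and only if the quadratic equation $z^2-(u+v)z-iuv=0$ has a solution $z\in\mathbb{Z}[i]$.
   Context: $\mathbb{Z}[i]$ is the ring of Gaussian integers, $U=\{1,-1,i,-i\}$ its unit group. $\gcd(x,y)\in U$ means $x,y$ have no common non-unit divisor. *)

From Stdlib Require Import ZArith.
Open Scope Z_scope.

Record GI := mkGI { re : Z; im : Z }.

Definition gzero : GI := mkGI 0 0.
Definition gone : GI := mkGI 1 0.
Definition gI : GI := mkGI 0 1.
Definition gadd (x y : GI) : GI := mkGI (re x + re y) (im x + im y).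
Definition gopp (x : GI) : GI := mkGI (- re x) (- im x).
Definition gsub (x y : GI) : GI := gadd x (gopp y).
Definition gmul (x y : GI) : GI :=
  mkGI (re x * re y - im x * im y) (re x * im y + im x * re y).

Definition in_U (e : GI) : Prop :=
  e = mkGI 1 0 \/ e = mkGI (-1) 0 \/ e = mkGI 0 1 \/ e = mkGI 0 (-1).

Definition gdvd (d x : GI) : Prop := exists q : GI, x = gmul d q.

Definition gcd_in_U (x y : GI) : Prop :=
  forall d : GI, gdvd d x -> gdvd d y -> in_U d.

(* If z is a root of z^2 - (u+v) z - i u v, then x := z and y := z - (u+v) satisfy
   x - y = u + v and x y = i u v; conversely any such x is a root.  A common divisor
   d of x and y divides x - y = u + v and -i x y = u v.  Since u, v are coprime,
   Bezout gives A u + B v = 1, and squaring,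
   1 = A^2 u (u + v) + (2 A B - A^2 - B^2) u v + B^2 v (u + v),
   so d divides 1 and is a unit. *)

From Stdlib Require Import ZArith Lia Wf_nat.
Open Scope Z_scope.

Lemma gi_ext (x y : GI) : re x = re y -> im x = im y -> x = y.
Proof. destruct x, y; cbn; intros; subst; reflexivity. Qed.

Ltac gsimp := unfold gsub, gmul, gadd, gopp, gone, gzero, gI in *; cbn [re im] in *.
Ltac gring := apply gi_ext; gsimp; ring.

Lemma gdvd_add d x y : gdvd d x -> gdvd d y -> gdvd d (gadd x y).
Proof. intros [p ->] [q ->]. exists (gadd p q). gring. Qed.

Lemma gdvd_sub d x y : gdvd d x -> gdvd d y -> gdvd d (gsub x y).
Proof. intros [p ->] [q ->]. exists (gsub p q). gring. Qed.

Lemma gdvd_mull d x y : gdvd d x -> gdvd d (gmul x y).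
Proof. intros [p ->]. exists (gmul p y). gring. Qed.

Lemma gdvd_mulr d x y : gdvd d y -> gdvd d (gmul x y).
Proof. intros [p ->]. exists (gmul x p). gring. Qed.

Definition gnorm (x : GI) : Z := re x * re x + im x * im x.

Lemma gnorm_ge0 x : 0 <= gnorm x.
Proof. unfold gnorm; nia. Qed.

Lemma gnorm_eq0 x : gnorm x = 0 -> x = gzero.
Proof. unfold gnorm; intro H; apply gi_ext; cbn; nia. Qed.

Lemma Z_round_div (n c : Z) : 0 < n -> exists q, - n <= 2 * (c - n * q) < n.
Proof.
  intros Hn. exists ((2 * c + n) / (2 * n)).
  pose proof (Z.div_mod (2 * c + n) (2 * n) ltac:(lia)).
  pose proof (Z.mod_pos_bound (2 * c + n) (2 * n) ltac:(lia)).
  lia.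
Qed.

(* q is a * conj b / gnorm b with both coordinates rounded to the nearest integer;
   the rounding errors give gnorm (a - b q) * gnorm b = e1^2 + e2^2 <= (gnorm b)^2 / 2. *)
Lemma gnorm_mod_lt (a b : GI) : 0 < gnorm b -> exists q, gnorm (gsub a (gmul b q)) < gnorm b.
Proof.
  intros Hn. set (n := gnorm b) in *.
  destruct (Z_round_div n (re a * re b + im a * im b) Hn) as [q1 Hq1].
  destruct (Z_round_div n (im a * re b - re a * im b) Hn) as [q2 Hq2].
  set (e1 := re a * re b + im a * im b - n * q1) in Hq1.
  set (e2 := im a * re b - re a * im b - n * q2) in Hq2.
  exists (mkGI q1 q2).
  assert (Hr : gnorm (gsub a (gmul b (mkGI q1 q2))) * n = e1 * e1 + e2 * e2)
    by (unfold e1, e2, n, gnorm; gsimp; ring).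
  assert (F1 : 4 * (e1 * e1) <= n * n) by nia.
  assert (F2 : 4 * (e2 * e2) <= n * n) by nia.
  pose proof (gnorm_ge0 (gsub a (gmul b (mkGI q1 q2)))).
  clearbody e1 e2 n; nia.
Qed.

Lemma gbezout (u v : GI) :
  exists a b g, gadd (gmul a u) (gmul b v) = g /\ gdvd g u /\ gdvd g v.
Proof.
  revert u.
  induction v as [v IH]
    using (well_founded_induction (well_founded_ltof GI (fun v => Z.to_nat (gnorm v)))).
  intros u. destruct (Z.eq_dec (gnorm v) 0) as [Hv | Hv].
  - apply gnorm_eq0 in Hv as ->.
    exists gone, gzero, u; split; [gring | split].
    + exists gone. gring.
    + exists gzero. gring.
  - destruct (gnorm_mod_lt u v ltac:(pose proof (gnorm_ge0 v); lia)) as [q Hq].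
    set (r := gsub u (gmul v q)) in Hq.
    destruct (IH r ltac:(unfold ltof; pose proof (gnorm_ge0 r); lia) v)
      as (a & b & g & Hg & Hgv & Hgr).
    exists b, (gsub a (gmul b q)), g; split; [| split; [| exact Hgv]].
    + rewrite <- Hg. unfold r. gring.
    + replace u with (gadd (gmul v q) r) by (unfold r; gring).
      apply gdvd_add; [apply gdvd_mull |]; assumption.
Qed.

Lemma gdvd1_in_U d : gdvd d gone -> in_U d.
Proof.
  intros [[q1 q2] Hq]. destruct d as [d1 d2]. injection Hq as E1 E2.
  assert (Hn : (d1 * d1 + d2 * d2) * (q1 * q1 + q2 * q2) = 1).
  { transitivity ((d1 * q1 - d2 * q2) ^ 2 + (d1 * q2 + d2 * q1) ^ 2); [ring |].
    rewrite <- E1, <- E2. reflexivity. }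
  clear E1 E2.
  assert (Hd : d1 * d1 + d2 * d2 = 1).
  { apply (Z.eq_mul_1_nonneg _ (q1 * q1 + q2 * q2)); [nia | exact Hn]. }
  clear Hn.
  assert (C1 : d1 = -1 \/ d1 = 0 \/ d1 = 1) by nia.
  assert (C2 : d2 = -1 \/ d2 = 0 \/ d2 = 1) by nia.
  unfold in_U.
  destruct C1 as [-> | [-> | ->]], C2 as [-> | [-> | ->]]; cbn in Hd; try lia; auto.
Qed.

Lemma in_U_gdvd1 g : in_U g -> gdvd g gone.
Proof.
  intros [-> | [-> | [-> | ->]]].
  - exists (mkGI 1 0); reflexivity.
  - exists (mkGI (-1) 0); reflexivity.
  - exists (mkGI 0 (-1)); reflexivity.
  - exists (mkGI 0 1); reflexivity.
Qed.

Lemma gcd_in_U_bezout u v :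
  gcd_in_U u v -> exists A B, gadd (gmul A u) (gmul B v) = gone.
Proof.
  intros Huv. destruct (gbezout u v) as (a & b & g & Hab & Hgu & Hgv).
  destruct (in_U_gdvd1 g (Huv g Hgu Hgv)) as [g' Hg'].
  exists (gmul g' a), (gmul g' b).
  rewrite Hg', <- Hab. gring.
Qed.

Lemma gcd_in_U_dvd_add_mul u v d :
  gcd_in_U u v -> gdvd d (gadd u v) -> gdvd d (gmul u v) -> in_U d.
Proof.
  intros Huv Hs Hp. destruct (gcd_in_U_bezout u v Huv) as (A & B & HAB).
  apply gdvd1_in_U.
  replace gone with
    (gadd (gadd (gmul (gmul (gmul A A) u) (gadd u v))
                (gmul (gsub (gmul (mkGI 2 0) (gmul A B)) (gadd (gmul A A) (gmul B B)))
                      (gmul u v)))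
          (gmul (gmul (gmul B B) v) (gadd u v))).
  - repeat apply gdvd_add; apply gdvd_mulr; assumption.
  - transitivity (gmul (gadd (gmul A u) (gmul B v)) (gadd (gmul A u) (gmul B v))).
    + gring.
    + rewrite HAB. reflexivity.
Qed.

Theorem proposition4p21 (u v : GI) :
  gcd_in_U u v ->
  gdvd (mkGI 1 1) (gmul u v) ->
  ((exists x y : GI,
      gcd_in_U x y /\ gsub x y = gadd u v /\ gmul x y = gmul gI (gmul u v))
   <->
   (exists z : GI,
      gsub (gsub (gmul z z) (gmul (gadd u v) z)) (gmul gI (gmul u v)) = gzero)).
Proof.
  intros Huv _. split.
  - intros (x & y & _ & Hs & Hp). exists x. rewrite <- Hs, <- Hp. gring.
  - intros [z Hz]. set (y := gsub z (gadd u v)).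
    assert (Hp : gmul z y = gmul gI (gmul u v)).
    { apply gi_ext; [apply (f_equal re) in Hz | apply (f_equal im) in Hz];
        unfold y; gsimp; lia. }
    exists z, y; split; [| split; [unfold y; gring | exact Hp]].
    intros d Hdz Hdy. apply (gcd_in_U_dvd_add_mul u v d Huv).
    + replace (gadd u v) with (gsub z y) by (unfold y; gring).
      apply gdvd_sub; assumption.
    + replace (gmul u v) with (gmul (mkGI 0 (-1)) (gmul z y)) by (rewrite Hp; gring).
      apply gdvd_mulr, gdvd_mull; assumption.
Qed.
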